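(* Suppose $G_1$ and $G_2$ are topological groups and there exist continuous injective group homomorphisms $\varphi_1:G_1\to G_2$ and $\varphi_2:G_2\to G_1$. Let $\mathcal C$ be a class of subgroups which is closed under continuous homomorphic images. If $G_1$ has a universal $\mathcal C$ subgroup, then $G_2$ also has a universal $\mathcal C$ subgroup.
   Context: $\mathcal C$ is a class of subgroups of topological groups; closed under continuous homomorphic images means: if $H\in\mathcal C$ is a subgroup of a topological group $G$ and $\psi:G\to G'$ is a continuous group homomorphism into a topological group $G'$, then $\psi(H)\in\mathcal C$. For subgroups $H\subseteq G$ and $K\subseteq G'$, write $H\le_g K$ if there is a continuous homomorphism $\varphi:G\to G'$ with $\varphi^{-1}(K)=H$. A universal $\mathcal C$ subgroup of $G$ is a subgroup $K\subseteq G$ with $K\in\mathcal C$ such that $H\le_g K$ (via a continuous endomorphism of $G$) for every subgroup $H\subseteq G$ with $H\in\mathcal C$. *)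

From HB Require Import structures.
From mathcomp Require Import all_boot all_order all_algebra.
From mathcomp Require Import all_classical all_reals all_analysis.
Set Implicit Arguments. Unset Strict Implicit. Unset Printing Implicit Defensive.
Local Open Scope classical_set_scope.

Record topGroup := TopGroup {
  tg_car :> topologicalType;
  tg_mul : tg_car -> tg_car -> tg_car;
  tg_inv : tg_car -> tg_car;
  tg_one : tg_car;
  tg_mulA : forall x y z, tg_mul x (tg_mul y z) = tg_mul (tg_mul x y) z;
  tg_mul1g : forall x, tg_mul tg_one x = x;
  tg_mulg1 : forall x, tg_mul x tg_one = x;
  tg_mulVg : forall x, tg_mul (tg_inv x) x = tg_one;
  tg_mulgV : forall x, tg_mul x (tg_inv x) = tg_one;
  tg_mul_cont : continuous (fun p : tg_car * tg_car => tg_mul p.1 p.2);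
  tg_inv_cont : continuous tg_inv
}.

Definition is_subgroup (G : topGroup) (H : set G) : Prop :=
  H (tg_one G) /\
  (forall x y, H x -> H y -> H (tg_mul x y)) /\
  (forall x, H x -> H (tg_inv x)).

Definition cont_hom (G G' : topGroup) (f : G -> G') : Prop :=
  continuous f /\ forall x y, f (tg_mul x y) = tg_mul (f x) (f y).

Definition subgroup_class := forall G : topGroup, set G -> Prop.

Definition closed_under_cont_hom_images (C : subgroup_class) : Prop :=
  forall (G G' : topGroup) (psi : G -> G') (H : set G),
    cont_hom psi -> is_subgroup H -> C G H -> C G' (psi @` H).

Definition le_g (G G' : topGroup) (H : set G) (K : set G') : Prop :=
  exists phi : G -> G', cont_hom phi /\ phi @^-1` K = H.

Definition universal_subgroup (C : subgroup_class) (G : topGroup) (K : set G) : Prop :=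
  is_subgroup K /\ C G K /\
  forall H : set G, is_subgroup H -> C G H -> le_g H K.

From mathcomp Require Import all_boot all_order all_algebra.
From mathcomp Require Import all_classical all_reals all_analysis.
Set Implicit Arguments.
Local Open Scope classical_set_scope.

(* Hence, for a universal
   subgroup K1 of G1, the image phi1(K1) is universal in G2: a subgroup H of
   G2 reduces along H <=_g phi2(H) <=_g K1 <=_g phi1(K1), and phi1(K1) lies
   in C by closure under continuous homomorphic images. *)

Lemma tg_idem_one (G : topGroup) (y : G) : tg_mul y y = y -> y = tg_one G.
Proof. by move=> yy; rewrite -(tg_mul1g y) -(tg_mulVg y) -tg_mulA yy. Qed.

Lemma tg_inv_uniq (G : topGroup) (a b : G) : tg_mul a b = tg_one G -> a = tg_inv b.
Proof. by move=> ab; rewrite -(tg_mulg1 a) -(tg_mulgV b) tg_mulA ab tg_mul1g. Qed.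

Lemma cont_hom_one (G G' : topGroup) (f : G -> G') :
  cont_hom f -> f (tg_one G) = tg_one G'.
Proof. by move=> [_ fM]; apply: tg_idem_one; rewrite -fM tg_mulg1. Qed.

Lemma cont_hom_inv (G G' : topGroup) (f : G -> G') (x : G) :
  cont_hom f -> f (tg_inv x) = tg_inv (f x).
Proof.
move=> fhom; apply: tg_inv_uniq; case: (fhom) => _ <-.
by rewrite tg_mulVg cont_hom_one.
Qed.

Lemma cont_hom_comp (G G' G'' : topGroup) (f : G -> G') (g : G' -> G'') :
  cont_hom f -> cont_hom g -> cont_hom (g \o f).
Proof.
move=> [fC fM] [gC gM]; split; last by move=> x y /=; rewrite fM gM.
by move=> x; apply: continuous_comp; [exact: fC | exact: gC].
Qed.

Lemma image_subgroup (G G' : topGroup) (f : G -> G') (H : set G) :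
  cont_hom f -> is_subgroup H -> is_subgroup (f @` H).
Proof.
move=> fhom [H1 [HM HV]]; split; first by exists (tg_one G); rewrite ?cont_hom_one.
split.
- move=> _ _ [x Hx <-] [y Hy <-]; exists (tg_mul x y); first exact: HM.
  by case: fhom => _ ->.
- by move=> _ [x Hx <-]; exists (tg_inv x); rewrite ?cont_hom_inv //; exact: HV.
Qed.

Lemma preimage_image_inj (T U : Type) (f : T -> U) (A : set T) :
  injective f -> f @^-1` (f @` A) = A.
Proof.
move=> finj; apply/seteqP; split => [x /= [y Ay /finj <-] // | x Ax].
by exists x.
Qed.

Lemma le_g_trans (G G' G'' : topGroup) (H : set G) (K : set G') (L : set G'') :
  le_g H K -> le_g K L -> le_g H L.
Proof.
move=> [f [fhom <-]] [g [ghom <-]].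
by exists (g \o f); split; [exact: cont_hom_comp | rewrite comp_preimage].
Qed.

Lemma le_g_image_inj (G G' : topGroup) (f : G -> G') (H : set G) :
  cont_hom f -> injective f -> le_g H (f @` H).
Proof. by move=> fhom finj; exists f; split; last exact: preimage_image_inj. Qed.

Theorem mainTheorem5 (G1 G2 : topGroup) (phi1 : G1 -> G2) (phi2 : G2 -> G1)
  (C : subgroup_class) :
  cont_hom phi1 -> injective phi1 ->
  cont_hom phi2 -> injective phi2 ->
  closed_under_cont_hom_images C ->
  (exists K1 : set G1, universal_subgroup C K1) ->
  exists K2 : set G2, universal_subgroup C K2.
Proof.
move=> phi1hom phi1inj phi2hom phi2inj Cimg [K1 [K1sub [CK1 K1univ]]].
exists (phi1 @` K1); split; first exact: image_subgroup.
split; first exact: Cimg.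
move=> H Hsub CH.
have H_phi2H : le_g H (phi2 @` H) by exact: le_g_image_inj.
have phi2H_K1 : le_g (phi2 @` H) K1.
  by apply: K1univ; [exact: image_subgroup | exact: Cimg].
have K1_phi1K1 : le_g K1 (phi1 @` K1) by exact: le_g_image_inj.
exact: le_g_trans (le_g_trans H_phi2H phi2H_K1) K1_phi1K1.
Qed.
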